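(* Let $\mathcal{X}$ be a projective, nonsingular, geometrically irreducible curve of genus $g$ over $\mathbb{F}_q$. Let $\mathcal{P}$ be a proper subset of $\mathcal{X}(\mathbb{F}_q)$ and $D=\sum_{P\in\mathcal{P}}P$. Let $G,H,J$ be divisors on $\mathcal{X}$ of degree at most $\deg(D)-1$ with $(\mathrm{supp}(G)\cup\mathrm{supp}(H)\cup\mathrm{supp}(J))\cap\mathrm{supp}(D)=\varnothing$. For each nonzero $f\in\mathscr{L}(J)$ let $H_f=H-(f)$. If \[ \mathscr{L}(\mathrm{lcm}(G,H_f)-D)\cap\big(\mathscr{L}(G)+\mathscr{L}(H_f)\big)=\{0\}\quad\text{for all nonzero }f\in\mathscr{L}(J), \] then $C(D,G)\cap C(D,H_f)=C(D,\gcd(G,H_f))$ (for every nonzero $f\in\mathscr{L}(J)$).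
   Context: $(f)$ is the principal divisor of a nonzero function $f$; $\gcd$ and $\mathrm{lcm}$ of divisors are taken coefficientwise (min and max of coefficients). $\mathscr{L}(E)=\{f\in\mathbb{F}_q(\mathcal{X})^*:(f)+E\ge0\}\cup\{0\}$, and $\mathscr{L}(G)+\mathscr{L}(H_f)$ is the sum of subspaces of the function field. Writing $D=P_1+\dots+P_n$, for a divisor $E$ such that every function in $\mathscr{L}(E)$ is regular at all points of $\mathrm{supp}(D)$, $C(D,E)=\{(f(P_1),\dots,f(P_n)):f\in\mathscr{L}(E)\}\subseteq\mathbb{F}_q^n$ (this applies to $G$, $H_f$ and $\gcd(G,H_f)$ here, since $\mathscr{L}(H_f)=f\mathscr{L}(H)$). *)

(* There is no algebraic-geometry library, so a curve X over F_q
   is modelled through its function field F_q(X) together with its places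
   (= closed points of X), the valuations v_P, place degrees and the residue
   (evaluation) maps at rational places. *)
From HB Require Import structures.
From mathcomp Require Import all_boot all_order all_algebra.
Set Implicit Arguments. Unset Strict Implicit. Unset Printing Implicit Defensive.
Import Order.TTheory GRing.Theory Num.Theory.
Local Open Scope ring_scope.

Definition divisor (Pl : eqType) := Pl -> int.

Definition has_degree (Pl : eqType) (pdeg : Pl -> nat) (E : divisor Pl) (d : int) :=
  exists s : seq Pl, [/\ uniq s, (forall P, E P != 0 -> P \in s) &
                        d = \sum_(P <- s) E P * (pdeg P)%:Z].

Definition finite_support (Pl : eqType) (E : divisor Pl) :=
  exists s : seq Pl, forall P, E P != 0 -> P \in s.

(* Data of the function field F_q(X) of the curve X over F = F_q:
   cst   : the embedding of the constants F_q into F_q(X)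
   princ_div  : principal divisor, princ_div f P = v_P(f) (meaningful for f != 0)
   pdeg  : degree of a place (rational points = places of degree 1)
   ev    : ev P f = f(P), the residue class of f at a rational place P *)
Record curve_data (F : finFieldType) (K : fieldType) (Pl : eqType) := CurveData {
  cst : {rmorphism F -> K};
  princ_div : K -> divisor Pl;
  pdeg : Pl -> nat;
  ev : Pl -> K -> F
}.

(* axioms of a function field of one variable with full constant field F_q,
   its places/valuations and the evaluation at rational places *)
Definition is_curve (F : finFieldType) (K : fieldType) (Pl : eqType)
  (X : curve_data F K Pl) : Prop :=
  let v := princ_div X in
  (forall x y P, x != 0 -> y != 0 -> v (x * y) P = v x P + v y P) /\
  (forall x y P, x != 0 -> y != 0 -> x + y != 0 ->
                  Num.min (v x P) (v y P) <= v (x + y) P) /\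
  (forall P, exists t, t != 0 /\ v t P = 1) /\
  (forall x, x != 0 -> finite_support (v x)) /\
      (* nonzero constants are units everywhere; F_q is the full constant field *)
  (forall a P, a != 0 -> v (cst X a) P = 0) /\
  (forall x, x != 0 -> (forall P, v x P = 0) -> exists a, x = cst X a) /\
  (* transcendence: there are nonconstant functions *)
  (exists x, x != 0 /\ exists P, v x P != 0) /\
  (forall P, (0 < pdeg X P)%N) /\
  (forall x, x != 0 -> has_degree (pdeg X) (v x) 0) /\
  (* evaluation at rational places (residue field = F_q) *)
      forall P, pdeg X P = 1%N ->
      [/\ (forall a, ev X P (cst X a) = a),
          (forall x y, (x == 0) || (0 <= v x P) -> (y == 0) || (0 <= v y P) ->
             ev X P (x + y) = ev X P x + ev X P y),
          (forall x y, (x == 0) || (0 <= v x P) -> (y == 0) || (0 <= v y P) ->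
             ev X P (x * y) = ev X P x * ev X P y),
          ev X P 0 = 0
        & (forall x, x != 0 -> 0 <= v x P -> (ev X P x == 0) = (0 < v x P))].

Definition RR (F : finFieldType) (K : fieldType) (Pl : eqType)
  (X : curve_data F K Pl) (E : divisor Pl) (f : K) : Prop :=
  f = 0 \/ forall P, 0 <= princ_div X f P + E P.

Definition dgcd (Pl : eqType) (E1 E2 : divisor Pl) : divisor Pl :=
  fun P => Num.min (E1 P) (E2 P).
Definition dlcm (Pl : eqType) (E1 E2 : divisor Pl) : divisor Pl :=
  fun P => Num.max (E1 P) (E2 P).

Definition sum_points (Pl : eqType) (Ps : seq Pl) : divisor Pl :=
  fun P => ((P \in Ps) : nat)%:Z.

Definition AGcode (F : finFieldType) (K : fieldType) (Pl : eqType)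
  (X : curve_data F K Pl) (Ps : seq Pl) (E : divisor Pl) (c : seq F) : Prop :=
  exists f, RR X E f /\ c = [seq ev X P f | P <- Ps].

(* If [c] is the common evaluation of [a] in L(G) and of [b] in L(H_f), then [a - b] lies in
   L(lcm(G, H_f)) and vanishes on the points of D, where lcm(G, H_f) is zero because the
   supports are disjoint from D and [f] is regular there; so [a - b] lies in
   L(lcm(G, H_f) - D) and in L(G) + L(H_f), hence is zero, and [a = b] lies in the
   intersection of L(G) and L(H_f), which is L(gcd(G, H_f)).  The converse inclusion
   is monotonicity of L. *)
From HB Require Import structures.
From mathcomp Require Import all_boot all_order all_algebra.
From mathcomp Require Import zify.
Set Implicit Arguments.
Unset Strict Implicit.
Unset Printing Implicit Defensive.

Import Order.TTheory GRing.Theory Num.Theory.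
Local Open Scope ring_scope.

Section RiemannRochSpaces.

Variables (F : finFieldType) (K : fieldType) (Pl : eqType) (X : curve_data F K Pl).
Local Notation v := (princ_div X).

Lemma RR_le (E1 E2 : divisor Pl) x :
  (forall P, E1 P <= E2 P) -> RR X E1 x -> RR X E2 x.
Proof. by move=> le_E [->|Ex]; [left | right=> P; have := le_E P; have := Ex P; lia]. Qed.

Lemma RR_dgcdl (E1 E2 : divisor Pl) x : RR X (dgcd E1 E2) x -> RR X E1 x.
Proof. by apply: RR_le => P; rewrite /dgcd; lia. Qed.

Lemma RR_dgcdr (E1 E2 : divisor Pl) x : RR X (dgcd E1 E2) x -> RR X E2 x.
Proof. by apply: RR_le => P; rewrite /dgcd; lia. Qed.

Lemma RR_dgcd (E1 E2 : divisor Pl) x :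
  RR X E1 x -> RR X E2 x -> RR X (dgcd E1 E2) x.
Proof.
move=> [->|E1x]; first by left.
by move=> [->|E2x]; [left | right=> P; have := E1x P; have := E2x P; rewrite /dgcd; lia].
Qed.

Hypothesis HX : is_curve X.

Lemma princ_divM x y P : x != 0 -> y != 0 -> v (x * y) P = v x P + v y P.
Proof. by case: HX => + _; apply. Qed.

Lemma princ_divD x y P :
  x != 0 -> y != 0 -> x + y != 0 -> Num.min (v x P) (v y P) <= v (x + y) P.
Proof. by case: HX => _ [+ _]; apply. Qed.

Lemma princ_div_cst a P : a != 0 -> v (cst X a) P = 0.
Proof. by case: HX => _ [_ [_ [_ [+ _]]]]; apply. Qed.

Lemma princ_divN x P : x != 0 -> v (- x) P = v x P.
Proof.
move=> x0; have m1 : (-1 : F) != 0 by rewrite oppr_eq0 oner_eq0.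
have m1K : cst X (-1) != 0 by rewrite rmorphN1 oppr_eq0 oner_eq0.
by rewrite -mulN1r -(rmorphN1 (cst X)) princ_divM // princ_div_cst // add0r.
Qed.

Lemma RR_opp E x : RR X E x -> RR X E (- x).
Proof.
move=> [->|Ex]; first by left; rewrite oppr0.
have [->|x0] := eqVneq x 0; first by left; rewrite oppr0.
by right=> P; rewrite princ_divN.
Qed.

Lemma RR_add E x y : RR X E x -> RR X E y -> RR X E (x + y).
Proof.
move=> [->|Ex]; first by rewrite add0r.
move=> [->|Ey]; first by rewrite addr0; right.
have [->|s0] := eqVneq (x + y) 0; first by left.
have [->|x0] := eqVneq x 0; first by rewrite add0r; right.
have [->|y0] := eqVneq y 0; first by rewrite addr0; right.
right=> P; have := princ_divD P x0 y0 s0; have := Ex P; have := Ey P.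
move: (v x P) (v y P) (v (x + y) P) (E P) => a b c e; lia.
Qed.

Lemma RR_dlcm_sub (E1 E2 : divisor Pl) x y :
  RR X E1 x -> RR X E2 y -> RR X (dlcm E1 E2) (x - y).
Proof.
move=> E1x E2y; apply: RR_add; first by apply: RR_le E1x => P; rewrite /dlcm; lia.
by apply: RR_opp; apply: RR_le E2y => P; rewrite /dlcm; lia.
Qed.

Definition regular_at (P : Pl) (x : K) := (x == 0) || (0 <= v x P).

Lemma RR_regular_at E x P : E P <= 0 -> RR X E x -> regular_at P x.
Proof.
rewrite /regular_at => EP [->|Ex]; first by rewrite eqxx.
by apply/orP; right; have := Ex P; lia.
Qed.

Lemma regular_atN P x : regular_at P x -> regular_at P (- x).
Proof.
rewrite /regular_at oppr_eq0; have [//|x0] := eqVneq x 0.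
by rewrite princ_divN.
Qed.

Section RationalPlace.

Variable P : Pl.
Hypothesis P_rational : pdeg X P = 1%N.

Let ev_spec := let: conj _ (conj _ (conj _ (conj _ (conj _ (conj _ (conj _ (conj _
  (conj _ evP)))))))) := HX in evP P P_rational.

Lemma ev_cst a : ev X P (cst X a) = a.
Proof. by case: ev_spec. Qed.

Lemma ev_add x y : regular_at P x -> regular_at P y ->
  ev X P (x + y) = ev X P x + ev X P y.
Proof. by case: ev_spec => _ + _ _ _; apply. Qed.

Lemma ev_mul x y : regular_at P x -> regular_at P y ->
  ev X P (x * y) = ev X P x * ev X P y.
Proof. by case: ev_spec => _ _ + _ _; apply. Qed.

Lemma ev_eq0 x : x != 0 -> 0 <= v x P -> (ev X P x == 0) = (0 < v x P).
Proof. by case: ev_spec => _ _ _ _; apply. Qed.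

Lemma ev_opp x : regular_at P x -> ev X P (- x) = - ev X P x.
Proof.
move=> reg_x; have reg_m1 : regular_at P (cst X (-1)).
  by rewrite /regular_at princ_div_cst ?lexx ?orbT // oppr_eq0 oner_eq0.
by rewrite -mulN1r -(rmorphN1 (cst X)) ev_mul // ev_cst mulN1r.
Qed.

Lemma ev_sub x y : regular_at P x -> regular_at P y ->
  ev X P (x - y) = ev X P x - ev X P y.
Proof. by move=> reg_x reg_y; rewrite ev_add ?ev_opp //; apply: regular_atN. Qed.

Lemma ev_eq0_princ_div_gt0 E x :
  E P <= 0 -> RR X E x -> x != 0 -> ev X P x = 0 -> 0 < v x P.
Proof.
move=> EP_le0 Ex x0 evx; have /orP[/eqP x_eq0|vx_ge0] := RR_regular_at EP_le0 Ex.
  by rewrite x_eq0 eqxx in x0.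
by rewrite -ev_eq0 // evx.
Qed.

End RationalPlace.

Lemma RR_sub_points E (Ps : seq Pl) x :
  {in Ps, forall P, pdeg X P = 1%N} -> {in Ps, forall P, E P = 0} ->
  RR X E x -> {in Ps, forall P, ev X P x = 0} ->
  RR X (fun P => E P - sum_points Ps P) x.
Proof.
move=> Ps_rat E0 Ex ev0; have [->|x0] := eqVneq x 0; first by left.
case: (Ex) => [/eqP|Ex_ge0]; first by rewrite (negbTE x0).
right=> P; rewrite /sum_points; case: (boolP (P \in Ps)) => PPs /=.
  have EP0 := E0 P PPs; have EP_le0 : E P <= 0 by rewrite EP0.
  by have := ev_eq0_princ_div_gt0 (Ps_rat P PPs) EP_le0 Ex x0 (ev0 P PPs); rewrite EP0; lia.
by rewrite subr0; apply: Ex_ge0.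
Qed.

End RiemannRochSpaces.

Theorem proposition4p5
  (F : finFieldType) (K : fieldType) (Pl : eqType) (X : curve_data F K Pl)
  (HX : is_curve X)
  (Ps : seq Pl) (HPs_uniq : uniq Ps)
  (HPs_rat : forall P, P \in Ps -> pdeg X P = 1%N)
  (HPs_proper : exists P, pdeg X P = 1%N /\ P \notin Ps)
  (G H J : divisor Pl)
  (HGfin : finite_support G) (HHfin : finite_support H) (HJfin : finite_support J)
  (HGdeg : exists d, has_degree (pdeg X) G d /\ d <= (size Ps)%:Z - 1)
  (HHdeg : exists d, has_degree (pdeg X) H d /\ d <= (size Ps)%:Z - 1)
  (HJdeg : exists d, has_degree (pdeg X) J d /\ d <= (size Ps)%:Z - 1)
  (Hsupp : forall P, P \in Ps -> [/\ G P = 0, H P = 0 & J P = 0])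
  (Hint : forall f, f != 0 -> RR X J f ->
     let Hf := fun P => H P - princ_div X f P in
     forall x, RR X (fun P => dlcm G Hf P - sum_points Ps P) x ->
       (exists a b, [/\ RR X G a, RR X Hf b & x = a + b]) -> x = 0) :
  forall f, f != 0 -> RR X J f ->
    let Hf := fun P => H P - princ_div X f P in
    forall c : seq F,
      (AGcode X Ps G c /\ AGcode X Ps Hf c) <-> AGcode X Ps (dgcd G Hf) c.
Proof.
move=> f f0 [/eqP|Jf]; first by rewrite (negbTE f0).
move=> Hf c; split; last first.
  case=> a [Ga ->]; split; exists a; split=> //.
    exact: RR_dgcdl Ga.
  exact: RR_dgcdr Ga.
case=> -[a [Ga ->]] [b [Hb /eq_in_map ev_ab]].
have Hf_le0 P : P \in Ps -> Hf P <= 0.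
  by move=> PPs; have [_ H0 J0] := Hsupp P PPs; have := Jf P; rewrite /Hf H0 J0; lia.
have lcm0 P : P \in Ps -> dlcm G Hf P = 0.
  by move=> PPs; have [G0 _ _] := Hsupp P PPs; have := Hf_le0 P PPs; rewrite /dlcm G0; lia.
have ev_ab0 P : P \in Ps -> ev X P (a - b) = 0.
  move=> PPs; have [G0 _ _] := Hsupp P PPs; have GP_le0 : G P <= 0 by rewrite G0.
  rewrite (ev_sub HX (HPs_rat P PPs)) ?(ev_ab P PPs) ?subrr //.
    exact: RR_regular_at GP_le0 Ga.
  exact: RR_regular_at (Hf_le0 P PPs) Hb.
have ab_lcmD := RR_sub_points HX HPs_rat lcm0 (RR_dlcm_sub HX Ga Hb) ev_ab0.
have /eqP : a - b = 0.
  apply: (Hint f f0 (or_intror Jf) (a - b) ab_lcmD).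
  by exists a, (- b); split=> //; apply: RR_opp.
rewrite subr_eq0 => /eqP ab; exists a; split=> //.
by apply: RR_dgcd; rewrite // ab.
Qed.
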